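(* Let $T\subset\mathbb{R}^2$ be (the open domain bounded by) a triangle with angles $\alpha\le\beta\le\gamma$. Then \[ A_T\ge\frac{1}{\sin\frac{\alpha}{2}}+\frac{1}{\sin\frac{\beta}{2}}. \]
   Context: For a domain $G\subsetneq\mathbb{R}^n$ let $d_G(x)=d(x,\partial G)$. The quasihyperbolic length of a rectifiable curve $\gamma\subset G$ is $\ell_k(\gamma)=\int_\gamma\frac{|dx|}{d_G(x)}$, and the quasihyperbolic distance is $k_G(x,y)=\inf\ell_k(\gamma)$ over rectifiable curves $\gamma\subset G$ joining $x$ and $y$. The distance ratio metric is $j_G(x,y)=\log\left(1+\frac{|x-y|}{\min\{d_G(x),d_G(y)\}}\right)$. The uniformity constant is $A_G=\inf\{A\ge1: k_G(x,y)\le A\,j_G(x,y)\text{ for all }x,y\in G\}$ (with $\inf\emptyset=+\infty$); $G$ is uniform if $A_G<\infty$. *)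

From Stdlib Require Import Reals Lra ClassicalEpsilon.
Open Scope R_scope.

Definition pt := (R * R)%type.
Definition dist (x y : pt) : R :=
  sqrt ((fst x - fst y) ^ 2 + (snd x - snd y) ^ 2).

(** Supremum / infimum of a set of reals (chosen via classical epsilon;
    they are meaningful whenever the sup / inf exists). *)
Definition is_glb (E : R -> Prop) (m : R) : Prop :=
  (forall x, E x -> m <= x) /\ (forall b, (forall x, E x -> b <= x) -> b <= m).
Definition Rsup (E : R -> Prop) : R := epsilon (inhabits 0) (fun m => is_lub E m).
Definition Rinf (E : R -> Prop) : R := epsilon (inhabits 0) (fun m => is_glb E m).

Fixpoint rsum (n : nat) (f : nat -> R) : R :=
  match n with O => 0 | S k => rsum k f + f k end.

(** A domain is a subset of the plane. Boundary of G: closure minus G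
    (this is the topological boundary for open G). *)
Definition boundary (G : pt -> Prop) (y : pt) : Prop :=
  (forall eps, 0 < eps -> exists z, G z /\ dist y z < eps) /\ ~ G y.

Definition dG (G : pt -> Prop) (x : pt) : R :=
  Rinf (fun r => exists y, boundary G y /\ r = dist x y).

Definition partition (a b : R) (n : nat) (p : nat -> R) : Prop :=
  p O = a /\ p n = b /\ forall i, (i < n)%nat -> p i <= p (S i).

Definition curve_continuous (g : R -> pt) : Prop :=
  forall t, 0 <= t <= 1 -> forall eps, 0 < eps ->
    exists delta, 0 < delta /\
      forall s, 0 <= s <= 1 -> Rabs (s - t) < delta -> dist (g s) (g t) < eps.

Definition chord_sum (g : R -> pt) (n : nat) (p : nat -> R) : R :=
  rsum n (fun i => dist (g (p i)) (g (p (S i)))).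

Definition arclen (g : R -> pt) (a b : R) : R :=
  Rsup (fun L => exists n p, partition a b n p /\ L = chord_sum g n p).

Definition rectifiable (g : R -> pt) : Prop :=
  exists M, forall n p, partition 0 1 n p -> chord_sum g n p <= M.

(** Line integral w.r.t. arc length of f along gamma on [0,1], defined as
    the (lower) Riemann–Stieltjes integral with respect to arc length:
    sup over partitions of sum_i (inf_{[t_i,t_{i+1}]} f o gamma) * length(gamma|[t_i,t_{i+1}]).
    For continuous f this is the usual integral  int_gamma f |dx|. *)
Definition line_integral (f : pt -> R) (g : R -> pt) : R :=
  Rsup (fun Sm => exists n p, partition 0 1 n p /\
     Sm = rsum n (fun i =>
           Rinf (fun v => exists t, p i <= t <= p (S i) /\ v = f (g t))
           * arclen g (p i) (p (S i)))).

Definition qh_length (G : pt -> Prop) (g : R -> pt) : R :=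
  line_integral (fun x => / dG G x) g.

Definition joins_in (G : pt -> Prop) (x y : pt) (g : R -> pt) : Prop :=
  curve_continuous g /\ rectifiable g /\ g 0 = x /\ g 1 = y /\
  forall t, 0 <= t <= 1 -> G (g t).

Definition kG (G : pt -> Prop) (x y : pt) : R :=
  Rinf (fun L => exists g, joins_in G x y g /\ L = qh_length G g).

Definition jG (G : pt -> Prop) (x y : pt) : R :=
  ln (1 + dist x y / Rmin (dG G x) (dG G y)).

(** A is admissible in the definition of A_G = inf{A >= 1 : k_G <= A j_G}. *)
Definition uniformity_admissible (G : pt -> Prop) (A : R) : Prop :=
  1 <= A /\ forall x y, G x -> G y -> kG G x y <= A * jG G x y.

(** "A_G >= c", i.e. c is a lower bound of the admissible set
    (with inf of the empty set = +infinity this is exactly A_G >= c). *)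
Definition uniformity_const_ge (G : pt -> Prop) (c : R) : Prop :=
  forall A, uniformity_admissible G A -> c <= A.

Definition cross (a b c : pt) : R :=
  (fst b - fst a) * (snd c - snd a) - (snd b - snd a) * (fst c - fst a).

Definition open_triangle (a b c : pt) (x : pt) : Prop :=
  exists l1 l2 l3, 0 < l1 /\ 0 < l2 /\ 0 < l3 /\ l1 + l2 + l3 = 1 /\
    fst x = l1 * fst a + l2 * fst b + l3 * fst c /\
    snd x = l1 * snd a + l2 * snd b + l3 * snd c.

Definition angle_at (a b c : pt) : R :=
  acos (((fst b - fst a) * (fst c - fst a) + (snd b - snd a) * (snd c - snd a))
        / (dist a b * dist a c)).

(* Near a vertex with angle theta the triangle looks like a sector, so there
   d_T(z) <= |z - v| sin(theta/2). Take x at distance r q^-N from a and y at the same distance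
   from b. A curve from x to y crosses the N annuli r q^(k-1-N) <= |z - a| <= r q^(k-N) around a,
   and those around b; in each it has length at least (1 - 1/q) r q^(k-N) while
   1/d_T >= 1/(r q^(k-N) sin(theta/2)), so k_T(x, y) >= N (1 - 1/q) (1/sin(alpha/2) + 1/sin(beta/2)),
   whereas j_T(x, y) = N log q + O(1). Letting N -> oo and then q -> 1 bounds A_T. *)

From Stdlib Require Import Reals Lra Lia ClassicalEpsilon FunctionalExtensionality PropExtensionality.
Open Scope R_scope.

Lemma dist_ge0 x y : 0 <= dist x y.
Proof. apply sqrt_pos. Qed.

Lemma dist_sq x y : dist x y * dist x y = (fst x - fst y) ^ 2 + (snd x - snd y) ^ 2.
Proof. unfold dist. apply sqrt_sqrt. apply Rplus_le_le_0_compat; apply pow2_ge_0. Qed.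

Lemma dist_sym x y : dist x y = dist y x.
Proof. unfold dist. f_equal. ring. Qed.

Lemma dist_triangle x y z : dist x z <= dist x y + dist y z.
Proof.
  pose proof (dist_ge0 x y). pose proof (dist_ge0 y z).
  unfold dist at 1. rewrite <- (sqrt_square (dist x y + dist y z)) by lra.
  apply sqrt_le_1_alt.
  pose proof (dist_sq x y). pose proof (dist_sq y z).
  pose proof (sqrt_cauchy (fst x - fst y) (snd x - snd y) (fst y - fst z) (snd y - snd z)) as C.
  replace (sqrt ((fst x - fst y)² + (snd x - snd y)²)) with (dist x y) in C
    by (unfold dist, Rsqr; f_equal; ring).
  replace (sqrt ((fst y - fst z)² + (snd y - snd z)²)) with (dist y z) in C
    by (unfold dist, Rsqr; f_equal; ring).
  nra.
Qed.

Lemma dist_le_mul_sqrt x y r X : 0 <= r -> 0 <= X ->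
  dist x y * dist x y <= r * r * X -> dist x y <= r * sqrt X.
Proof.
  intros Hr HX H. rewrite <- (sqrt_square (dist x y)) by apply dist_ge0.
  rewrite <- (sqrt_square r) by exact Hr. rewrite <- sqrt_mult_alt by nra.
  apply sqrt_le_1_alt, H.
Qed.

Lemma dist_reverse_triangle v x y : Rabs (dist v x - dist v y) <= dist x y.
Proof.
  pose proof (dist_triangle v x y). pose proof (dist_triangle v y x).
  rewrite (dist_sym y x) in *. apply Rabs_le. lra.
Qed.

Lemma Rabs_coord_le_dist x y :
  Rabs (fst x - fst y) <= dist x y /\ Rabs (snd x - snd y) <= dist x y.
Proof.
  pose proof (pow2_ge_0 (fst x - fst y)). pose proof (pow2_ge_0 (snd x - snd y)).
  split; rewrite <- sqrt_Rsqr_abs; apply sqrt_le_1_alt; unfold Rsqr; nra.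
Qed.

Lemma Rabs_linear_form_le (p q : pt) u v :
  Rabs (u * (fst p - fst q) + v * (snd p - snd q)) <= (Rabs u + Rabs v) * dist p q.
Proof.
  eapply Rle_trans; [apply Rabs_triang|]. rewrite !Rabs_mult.
  destruct (Rabs_coord_le_dist p q).
  pose proof (Rabs_pos u). pose proof (Rabs_pos v). nra.
Qed.

Lemma Rabs_le_between x e : Rabs x <= e -> - e <= x <= e.
Proof. intros H. pose proof (Rle_abs x). pose proof (Rle_abs (- x)). rewrite Rabs_Ropp in *. lra. Qed.

Lemma Rdiv_le_of_le_mul x y c : 0 < c -> x <= y * c -> x / c <= y.
Proof.
  intros Hc H. apply Rmult_le_reg_r with c; [exact Hc|].
  unfold Rdiv. rewrite Rmult_assoc, Rinv_l, Rmult_1_r by lra. exact H.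
Qed.

Definition segment (u v : pt) (t : R) : pt :=
  (fst u + t * (fst v - fst u), snd u + t * (snd v - snd u)).

Lemma dist_segment u v s t : dist (segment u v s) (segment u v t) = Rabs (s - t) * dist u v.
Proof.
  unfold dist, segment; cbn [fst snd].
  replace ((fst u + s * (fst v - fst u) - (fst u + t * (fst v - fst u))) ^ 2 +
   (snd u + s * (snd v - snd u) - (snd u + t * (snd v - snd u))) ^ 2)
  with (Rsqr (s - t) * ((fst u - fst v) ^ 2 + (snd u - snd v) ^ 2)) by (unfold Rsqr; ring).
  rewrite sqrt_mult_alt by apply Rle_0_sqr. rewrite sqrt_Rsqr_abs. reflexivity.
Qed.

Lemma segment0 u v : segment u v 0 = u.
Proof. destruct u; unfold segment; simpl. f_equal; ring. Qed.

Lemma segment1 u v : segment u v 1 = v.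
Proof. destruct v; unfold segment; simpl. f_equal; ring. Qed.

Lemma dist_segment_start u v t : dist u (segment u v t) = Rabs t * dist u v.
Proof.
  rewrite <- (segment0 u v) at 1. rewrite dist_segment, Rminus_0_l, Rabs_Ropp. reflexivity.
Qed.

Lemma Rinf_is_glb (E : R -> Prop) :
  (exists x, E x) -> (exists m, forall x, E x -> m <= x) -> is_glb E (Rinf E).
Proof.
  intros [x0 H0] [m Hm]. unfold Rinf. apply epsilon_spec.
  destruct (completeness (fun y => E (- y))) as [l [Hub Hlub]].
  - exists (- m). intros y Hy. apply Hm in Hy. lra.
  - exists (- x0). rewrite Ropp_involutive. exact H0.
  - exists (- l). split.
    + intros x Hx. enough (- x <= l) by lra. apply Hub. rewrite Ropp_involutive. exact Hx.
    + intros b Hb. enough (l <= - b) by lra. apply Hlub. intros y Hy. apply Hb in Hy. lra.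
Qed.

Lemma Rsup_is_lub (E : R -> Prop) :
  (exists x, E x) -> (exists m, forall x, E x -> x <= m) -> is_lub E (Rsup E).
Proof.
  intros H0 Hb. unfold Rsup. apply epsilon_spec.
  destruct (completeness E) as [l Hl]; [exact Hb | exact H0 | exists l; exact Hl].
Qed.

Lemma Rinf_lb E x : (exists m, forall x, E x -> m <= x) -> E x -> Rinf E <= x.
Proof. intros Hb Hx. apply (Rinf_is_glb E (ex_intro _ x Hx) Hb), Hx. Qed.

Lemma Rinf_glb E b : (exists x, E x) -> (forall x, E x -> b <= x) -> b <= Rinf E.
Proof. intros Hn Hb. exact (proj2 (Rinf_is_glb E Hn (ex_intro _ b Hb)) b Hb). Qed.

Lemma Rsup_ub E x : (exists m, forall x, E x -> x <= m) -> E x -> x <= Rsup E.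
Proof. intros Hb Hx. apply (Rsup_is_lub E (ex_intro _ x Hx) Hb), Hx. Qed.

Lemma Rsup_lub E b : (exists x, E x) -> (forall x, E x -> x <= b) -> Rsup E <= b.
Proof. intros Hn Hb. exact (proj2 (Rsup_is_lub E Hn (ex_intro _ b Hb)) b Hb). Qed.

Lemma rsum_add n1 n2 f : rsum (n1 + n2) f = rsum n1 f + rsum n2 (fun i => f (n1 + i)%nat).
Proof.
  induction n2; simpl; [rewrite Nat.add_0_r; ring|].
  rewrite Nat.add_succ_r. simpl. rewrite IHn2. ring.
Qed.

Lemma eq_rsum n f h : (forall i, (i < n)%nat -> f i = h i) -> rsum n f = rsum n h.
Proof.
  induction n; intros H; simpl; auto.
  rewrite IHn, H by (intros; try apply H; lia). reflexivity.
Qed.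

Lemma rsum_le n f h : (forall i, (i < n)%nat -> f i <= h i) -> rsum n f <= rsum n h.
Proof.
  induction n; intros H; simpl; [lra|].
  pose proof (H n ltac:(lia)). pose proof (IHn ltac:(intros; apply H; lia)). lra.
Qed.

Lemma rsum_const n c : rsum n (fun _ => c) = INR n * c.
Proof. induction n; simpl rsum; [simpl; ring|]. rewrite IHn, S_INR. ring. Qed.

Lemma rsum_ge0 n f : (forall i, (i < n)%nat -> 0 <= f i) -> 0 <= rsum n f.
Proof.
  intros H. replace 0 with (rsum n (fun _ => 0)) by (rewrite rsum_const; ring).
  apply rsum_le, H.
Qed.

Lemma rsum_scale n k f : rsum n (fun i => k * f i) = k * rsum n f.
Proof. induction n; simpl; [ring|]. rewrite IHn. ring. Qed.

Lemma rsum_telescope n (p : nat -> R) : rsum n (fun i => p (S i) - p i) = p n - p O.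
Proof. induction n; simpl; [ring|]. rewrite IHn. ring. Qed.

Lemma partition_le u v n p : partition u v n p ->
  forall i j, (i <= j <= n)%nat -> p i <= p j.
Proof.
  intros (_ & _ & Hm) i j Hij. induction j.
  - replace i with 0%nat by lia. lra.
  - destruct (Nat.eq_dec i (S j)) as [->|]; [lra|].
    pose proof (IHj ltac:(lia)). pose proof (Hm j ltac:(lia)). lra.
Qed.

Lemma partition_range u v n p : partition u v n p -> forall i, (i <= n)%nat -> u <= p i <= v.
Proof.
  intros Hp i Hi. pose proof (partition_le u v n p Hp 0 i ltac:(lia)).
  pose proof (partition_le u v n p Hp i n ltac:(lia)).
  destruct Hp as (Hp0 & Hpn & _). lra.
Qed.

Lemma partition_bounds_le u v n p : partition u v n p -> u <= v.
Proof. intros Hp. pose proof (partition_range u v n p Hp 0 ltac:(lia)). lra. Qed.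

Definition pair_part (u v : R) : nat -> R := fun i => match i with O => u | _ => v end.

Lemma partition_pair u v : u <= v -> partition u v 1 (pair_part u v).
Proof. intros H. repeat split; auto. intros i Hi. replace i with 0%nat by lia. exact H. Qed.

Definition concat_part (n1 : nat) (p1 p2 : nat -> R) : nat -> R :=
  fun i => if Nat.leb i n1 then p1 i else p2 (i - n1)%nat.

Lemma partition_concat u v w n1 n2 p1 p2 : partition u v n1 p1 -> partition v w n2 p2 ->
  partition u w (n1 + n2) (concat_part n1 p1 p2).
Proof.
  intros (A0 & An & Am) (B0 & Bn & Bm). unfold concat_part. split; [|split].
  - exact A0.
  - destruct (Nat.leb (n1 + n2) n1) eqn:E.
    + apply Nat.leb_le in E. replace n2 with 0%nat in * by lia. rewrite Nat.add_0_r. congruence.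
    + replace (n1 + n2 - n1)%nat with n2 by lia. exact Bn.
  - intros i Hi. destruct (Nat.leb i n1) eqn:E1; destruct (Nat.leb (S i) n1) eqn:E2.
    + apply Am. apply Nat.leb_le in E2. lia.
    + apply Nat.leb_le in E1. apply Nat.leb_gt in E2. replace i with n1 by lia.
      replace (S n1 - n1)%nat with 1%nat by lia. rewrite An, <- B0. apply Bm. lia.
    + apply Nat.leb_gt in E1. apply Nat.leb_le in E2. lia.
    + apply Nat.leb_gt in E1. replace (S i - n1)%nat with (S (i - n1)) by lia. apply Bm. lia.
Qed.

Lemma rsum_concat (F : R -> R -> R) n1 n2 p1 p2 : p1 n1 = p2 O ->
  rsum (n1 + n2) (fun i => F (concat_part n1 p1 p2 i) (concat_part n1 p1 p2 (S i))) =
  rsum n1 (fun i => F (p1 i) (p1 (S i))) + rsum n2 (fun i => F (p2 i) (p2 (S i))).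
Proof.
  intros Hj. rewrite rsum_add. unfold concat_part. f_equal; apply eq_rsum; intros i Hi.
  - replace (Nat.leb i n1) with true by (symmetry; apply Nat.leb_le; lia).
    replace (Nat.leb (S i) n1) with true by (symmetry; apply Nat.leb_le; lia). reflexivity.
  - replace (Nat.leb (S (n1 + i)) n1) with false by (symmetry; apply Nat.leb_gt; lia).
    replace (S (n1 + i) - n1)%nat with (S i) by lia.
    destruct (Nat.leb (n1 + i) n1) eqn:E.
    + apply Nat.leb_le in E. replace i with 0%nat by lia. rewrite Nat.add_0_r, Hj. reflexivity.
    + replace (n1 + i - n1)%nat with i by lia. reflexivity.
Qed.

Definition rev_part (n : nat) (p : nat -> R) : nat -> R := fun i => 1 - p (n - i)%nat.

Lemma partition_rev n p u : partition 0 u n p -> partition (1 - u) 1 n (rev_part n p).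
Proof.
  intros (H0 & Hn & Hm). unfold rev_part. repeat split.
  - rewrite Nat.sub_0_r, Hn. reflexivity.
  - replace (n - n)%nat with 0%nat by lia. rewrite H0. ring.
  - intros i Hi. replace (n - i)%nat with (S (n - S i)) by lia.
    pose proof (Hm (n - S i)%nat ltac:(lia)). lra.
Qed.

Lemma chord_sum_ge0 g n p : 0 <= chord_sum g n p.
Proof. apply rsum_ge0. intros; apply dist_ge0. Qed.

Section Arclength.

Variables (g : R -> pt) (M : R).
Hypothesis chord_sum_le : forall n p, partition 0 1 n p -> chord_sum g n p <= M.

Lemma chord_sum_sub_le u v n p : 0 <= u -> v <= 1 -> partition u v n p ->
  chord_sum g n p <= M.
Proof.
  intros Hu Hv Hp. pose proof (partition_bounds_le _ _ _ _ Hp) as Huv.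
  pose proof (partition_concat _ _ _ _ _ _ _ (partition_pair 0 u Hu) Hp) as P1.
  pose proof (chord_sum_le _ _ (partition_concat _ _ _ _ _ _ _ P1 (partition_pair v 1 Hv))) as HB.
  assert (Ev : concat_part 1 (pair_part 0 u) p (1 + n) = v).
  { destruct Hp as (H0 & Hn & _). unfold concat_part. destruct (Nat.leb (1 + n) 1) eqn:E.
    - apply Nat.leb_le in E. replace n with 0%nat in * by lia. simpl. congruence.
    - replace (1 + n - 1)%nat with n by lia. exact Hn. }
  unfold chord_sum in HB.
  rewrite (rsum_concat (fun s t => dist (g s) (g t))) in HB by (rewrite Ev; reflexivity).
  rewrite (rsum_concat (fun s t => dist (g s) (g t))) in HB by (destruct Hp as (H0 & _); exact (eq_sym H0)).
  pose proof (chord_sum_ge0 g 1 (pair_part 0 u)). pose proof (chord_sum_ge0 g 1 (pair_part v 1)).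
  unfold chord_sum in *. lra.
Qed.

Lemma arclen_bounds u v : 0 <= u -> u <= v -> v <= 1 ->
  dist (g u) (g v) <= arclen g u v /\ arclen g u v <= M.
Proof.
  intros Hu Huv Hv.
  assert (Hpair : exists n p, partition u v n p /\
                    dist (g u) (g v) = chord_sum g n p).
  { exists 1%nat, (pair_part u v). split; [apply partition_pair, Huv|].
    unfold chord_sum. simpl. ring. }
  split.
  - apply Rsup_ub; [|exact Hpair].
    exists M. intros L (n & p & Hp & ->). eapply chord_sum_sub_le; eauto.
  - apply Rsup_lub; [exact (ex_intro _ _ Hpair)|].
    intros L (n & p & Hp & ->). eapply chord_sum_sub_le; eauto.
Qed.

Lemma arclen_superadd u v w : 0 <= u -> u <= v -> v <= w -> w <= 1 ->
  arclen g u v + arclen g v w <= arclen g u w.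
Proof.
  intros Hu Huv Hvw Hw.
  set (chords x y := fun L => exists n p, partition x y n p /\ L = chord_sum g n p).
  assert (Hne : forall x y, x <= y -> exists L, chords x y L).
  { intros x y Hxy. exists (chord_sum g 1 (pair_part x y)), 1%nat, (pair_part x y).
    split; [apply partition_pair, Hxy | reflexivity]. }
  assert (Hcat : forall c1 c2, chords u v c1 -> chords v w c2 -> c1 + c2 <= arclen g u w).
  { intros c1 c2 (n1 & p1 & Hp1 & ->) (n2 & p2 & Hp2 & ->). apply Rsup_ub.
    - exists M. intros L (n & p & Hp & ->). eapply chord_sum_sub_le; eauto.
    - exists (n1 + n2)%nat, (concat_part n1 p1 p2).
      split; [eapply partition_concat; eauto|].
      unfold chord_sum. rewrite (rsum_concat (fun s t => dist (g s) (g t))); [reflexivity|].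
      destruct Hp1 as (_ & -> & _). destruct Hp2 as (-> & _). reflexivity. }
  assert (H1 : forall c2, chords v w c2 -> arclen g u v <= arclen g u w - c2).
  { intros c2 H2. apply Rsup_lub; [apply Hne, Huv|].
    intros c1 H1. pose proof (Hcat c1 c2 H1 H2). lra. }
  assert (arclen g v w <= arclen g u w - arclen g u v).
  { apply Rsup_lub; [apply Hne, Hvw|]. intros c2 H2. pose proof (H1 c2 H2). lra. }
  lra.
Qed.

Lemma rsum_arclen_le n : forall u v p, 0 <= u -> v <= 1 -> partition u v n p ->
  rsum n (fun i => arclen g (p i) (p (S i))) <= arclen g u v.
Proof.
  induction n as [|n IHn]; intros u v p Hu Hv Hp.
  - destruct Hp as (H0 & Hn & _). simpl. rewrite H0 in Hn. subst v.
    pose proof (arclen_bounds u u Hu (Rle_refl u) Hv). pose proof (dist_ge0 (g u) (g u)). lra.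
  - simpl. pose proof (partition_range _ _ _ _ Hp n ltac:(lia)).
    destruct Hp as (H0 & Hn & Hm).
    assert (Hp' : partition u (p n) n p) by (repeat split; auto; intros; apply Hm; lia).
    pose proof (IHn u (p n) p Hu ltac:(lra) Hp'). pose proof (Hm n ltac:(lia)).
    pose proof (arclen_superadd u (p n) (p (S n)) Hu ltac:(lra) ltac:(lra) ltac:(lra)).
    rewrite Hn in *. lra.
Qed.

End Arclength.

Definition continuous01 (phi : R -> R) : Prop :=
  forall t, 0 <= t <= 1 -> forall eps, 0 < eps -> exists delta, 0 < delta /\
    forall s, 0 <= s <= 1 -> Rabs (s - t) < delta -> Rabs (phi s - phi t) < eps.

Lemma continuous01_lipschitz_comp g K (h : pt -> R) : curve_continuous g -> 0 <= K ->
  (forall u v, Rabs (h u - h v) <= K * dist u v) -> continuous01 (fun t => h (g t)).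
Proof.
  intros Hg HK Hh t Ht eps He.
  destruct (Hg t Ht (eps / (K + 1))) as (d & Hd & Hs); [apply Rdiv_lt_0_compat; lra|].
  exists d. split; [exact Hd|]. intros s Hs1 Hs2. pose proof (Hs s Hs1 Hs2).
  eapply Rle_lt_trans; [apply Hh|].
  assert (K * dist (g s) (g t) <= K * (eps / (K + 1))) by (apply Rmult_le_compat_l; lra).
  enough (K * (eps / (K + 1)) < eps) by lra.
  apply Rmult_lt_reg_r with (K + 1); [lra|].
  replace (K * (eps / (K + 1)) * (K + 1)) with (K * eps) by (field; lra). nra.
Qed.

Definition clamp01 t := Rmax 0 (Rmin 1 t).

Lemma clamp01_in t : 0 <= clamp01 t <= 1.
Proof. unfold clamp01, Rmax, Rmin. repeat destruct Rle_dec; lra. Qed.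

Lemma clamp01_id t : 0 <= t <= 1 -> clamp01 t = t.
Proof. intros. unfold clamp01, Rmax, Rmin. repeat destruct Rle_dec; lra. Qed.

Lemma clamp01_lipschitz s t : Rabs (clamp01 s - clamp01 t) <= Rabs (s - t).
Proof.
  pose proof (Rle_abs (s - t)). pose proof (Rle_abs (- (s - t))). rewrite Rabs_Ropp in *.
  apply Rabs_le. unfold clamp01, Rmax, Rmin. repeat destruct Rle_dec; lra.
Qed.

(* Extend phi to all of R by clamping, then use the extreme value theorem. *)
Lemma continuous01_pos_lb phi : continuous01 phi -> (forall t, 0 <= t <= 1 -> 0 < phi t) ->
  exists delta, 0 < delta /\ forall t, 0 <= t <= 1 -> delta <= phi t.
Proof.
  intros Hc Hp.
  assert (C : forall x, continuity_pt (fun t => phi (clamp01 t)) x).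
  { intros x eps He. destruct (Hc (clamp01 x) (clamp01_in x) eps He) as (d & Hd & Hs).
    exists d. split; [exact Hd|]. intros x' (_ & Hx'). apply Hs; [apply clamp01_in|].
    eapply Rle_lt_trans; [apply clamp01_lipschitz | exact Hx']. }
  destruct (continuity_ab_min (fun t => phi (clamp01 t)) 0 1 ltac:(lra) (fun c _ => C c))
    as (m & Hm & _).
  exists (phi (clamp01 m)). split; [apply Hp, clamp01_in|].
  intros t Ht. pose proof (Hm t Ht) as H. cbv beta in H. rewrite (clamp01_id t Ht) in H. exact H.
Qed.

Definition hit_time (phi : R -> R) (r : R) : R :=
  Rinf (fun t => 0 <= t <= 1 /\ r <= phi t).

Section HitTime.

Variables (phi : R -> R) (r : R).
Hypotheses (phi_cont : continuous01 phi) (phi0_le : phi 0 <= r)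
  (reached : exists t0, 0 <= t0 <= 1 /\ r <= phi t0).

Let E := fun t => 0 <= t <= 1 /\ r <= phi t.

Lemma hit_time_glb : is_glb E (hit_time phi r).
Proof.
  destruct reached as [t0 Ht0]. apply Rinf_is_glb; [exists t0; exact Ht0|].
  exists 0. intros x (Hx & _). lra.
Qed.

Lemma hit_time_in01 : 0 <= hit_time phi r <= 1.
Proof.
  destruct hit_time_glb as [Hlb Hgr]. destruct reached as (t0 & Ht0 & Hr0). split.
  - apply Hgr. intros x (Hx & _). lra.
  - pose proof (Hlb t0 (conj Ht0 Hr0)). lra.
Qed.

Lemma lt_hit_time t : 0 <= t < hit_time phi r -> phi t < r.
Proof.
  intros Ht. destruct hit_time_glb as [Hlb _].
  destruct (Rlt_or_le (phi t) r) as [Hlt|Hge]; [exact Hlt|].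
  pose proof hit_time_in01. assert (Et : E t) by (split; [lra | exact Hge]).
  pose proof (Hlb t Et). lra.
Qed.

Lemma hit_time_reached : phi (hit_time phi r) = r.
Proof.
  set (tau := hit_time phi r). pose proof hit_time_in01 as T.
  destruct hit_time_glb as [Hlb Hgr]. fold tau in T, Hlb, Hgr.
  apply Rle_antisym.
  - destruct (Rle_or_lt (phi tau) r) as [Hle|Hlt]; [exact Hle|]. exfalso.
    assert (Hpos : 0 < tau) by (destruct (Req_dec tau 0) as [E0|]; [rewrite E0 in Hlt|]; lra).
    destruct (phi_cont tau T (phi tau - r) ltac:(lra)) as (d & Hd & Hs).
    assert (Hleft : exists t, 0 <= t < tau /\ tau - t < d)
      by (exists (Rmax 0 (tau - d / 2)); unfold Rmax; destruct Rle_dec; lra).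
    destruct Hleft as (t & Ht & Htd).
    pose proof (Hs t ltac:(split; lra) ltac:(rewrite Rabs_left; lra)) as Hclose.
    pose proof (lt_hit_time t Ht). apply Rabs_def2 in Hclose. lra.
  - destruct (Rle_or_lt r (phi tau)) as [Hle|Hlt]; [exact Hle|]. exfalso.
    destruct (phi_cont tau T (r - phi tau) ltac:(lra)) as (d & Hd & Hs).
    enough (tau + d <= tau) by lra.
    apply Hgr. intros x (Hx & Hxr). destruct (Rle_or_lt (tau + d) x) as [|Hx']; [assumption|].
    pose proof (Hlb x (conj Hx Hxr)).
    pose proof (Hs x Hx ltac:(rewrite Rabs_pos_eq; lra)) as Hclose.
    apply Rabs_def2 in Hclose. lra.
Qed.

End HitTime.

(* Witnessed by the first hitting times of the levels. *)
Lemma level_crossings phi (l : nat -> R) N : continuous01 phi ->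
  (forall k, l k <= l (S k)) -> phi 0 = l O ->
  (exists t0, 0 <= t0 <= 1 /\ l N <= phi t0) ->
  exists tau : nat -> R, partition 0 (tau N) N tau /\ tau N <= 1 /\
    forall k, (k <= N)%nat -> phi (tau k) = l k /\ forall t, 0 <= t <= tau k -> phi t <= l k.
Proof.
  intros Hc Hl H0 (t0 & Ht0 & HN).
  assert (Hmono : forall i j, (i <= j)%nat -> l i <= l j).
  { intros i j Hij. induction Hij; [lra|]. pose proof (Hl m). lra. }
  set (tau k := hit_time phi (l k)).
  assert (Htau : forall k, (k <= N)%nat ->
            0 <= tau k <= 1 /\ phi (tau k) = l k /\ forall t, 0 <= t < tau k -> phi t < l k).
  { intros k Hk.
    assert (H0k : phi 0 <= l k) by (rewrite H0; apply Hmono; lia).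
    assert (Hreach : exists t, 0 <= t <= 1 /\ l k <= phi t)
      by (exists t0; pose proof (Hmono k N Hk); split; [exact Ht0 | lra]).
    repeat split; try apply hit_time_in01; auto.
    - apply hit_time_reached; auto.
    - intros t Ht. apply (lt_hit_time phi (l k)); auto. }
  exists tau. split; [|split].
  - repeat split.
    + destruct (Htau 0%nat ltac:(lia)) as (T & _ & Hbefore).
      destruct (Rle_or_lt (tau 0%nat) 0) as [|Hpos]; [lra|].
      pose proof (Hbefore 0 ltac:(split; lra)). lra.
    + intros k Hk. destruct (Htau k ltac:(lia)) as (T1 & E1 & B1).
      destruct (Htau (S k) ltac:(lia)) as (T2 & E2 & _).
      destruct (Rle_or_lt (tau k) (tau (S k))) as [|Hlt]; [assumption|].
      pose proof (Hl k). pose proof (B1 (tau (S k)) ltac:(split; lra)). lra.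
  - apply Htau; lia.
  - intros k Hk. destruct (Htau k Hk) as (T & E & B). split; [exact E|].
    intros t Ht. destruct (Req_dec t (tau k)) as [->|]; [lra|]. left. apply B. lra.
Qed.

Definition bary1 (a b c x : pt) := cross x b c / cross a b c.
Definition bary2 (a b c x : pt) := cross a x c / cross a b c.
Definition bary3 (a b c x : pt) := cross a b x / cross a b c.

Definition bary_pt (a b c : pt) (m1 m2 m3 : R) : pt :=
  (m1 * fst a + m2 * fst b + m3 * fst c, m1 * snd a + m2 * snd b + m3 * snd c).

Definition centroid a b c := bary_pt a b c (1/3) (1/3) (1/3).

Section Triangle.

Variables a b c : pt.
Hypothesis nondeg : cross a b c <> 0.

Let G := open_triangle a b c.

Lemma open_triangle_bary x :
  G x <-> 0 < bary1 a b c x /\ 0 < bary2 a b c x /\ 0 < bary3 a b c x.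
Proof.
  unfold G, bary1, bary2, bary3. split.
  - intros (l1 & l2 & l3 & H1 & H2 & H3 & Hs & Hx & Hy).
    replace l1 with (1 - l2 - l3) in * by lra.
    replace (cross x b c) with ((1 - l2 - l3) * cross a b c)
      by (unfold cross; rewrite Hx, Hy; ring).
    replace (cross a x c) with (l2 * cross a b c) by (unfold cross; rewrite Hx, Hy; ring).
    replace (cross a b x) with (l3 * cross a b c) by (unfold cross; rewrite Hx, Hy; ring).
    unfold Rdiv. rewrite !Rmult_assoc, !Rinv_r, !Rmult_1_r by exact nondeg. lra.
  - intros (H1 & H2 & H3). exists (cross x b c / cross a b c), (cross a x c / cross a b c),
      (cross a b x / cross a b c).
    unfold cross in *. repeat split; auto; field; auto.
Qed.

Lemma bary_pt_coords m1 m2 m3 : m1 + m2 + m3 = 1 ->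
  bary1 a b c (bary_pt a b c m1 m2 m3) = m1 /\ bary2 a b c (bary_pt a b c m1 m2 m3) = m2 /\
  bary3 a b c (bary_pt a b c m1 m2 m3) = m3.
Proof.
  intros Hs. unfold bary1, bary2, bary3, bary_pt. unfold cross in *; cbn [fst snd].
  replace m3 with (1 - m1 - m2) by lra. repeat split; field; exact nondeg.
Qed.

Lemma open_triangle_bary_pt m1 m2 m3 : 0 < m1 -> 0 < m2 -> 0 < m3 -> m1 + m2 + m3 = 1 ->
  G (bary_pt a b c m1 m2 m3).
Proof. intros. exists m1, m2, m3. repeat split; auto. Qed.

(* Points on the edges are approached along the segment towards the centroid. *)
Lemma boundary_bary_pt m1 m2 m3 : 0 <= m1 -> 0 <= m2 -> 0 <= m3 -> m1 + m2 + m3 = 1 ->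
  (m1 = 0 \/ m2 = 0 \/ m3 = 0) -> boundary G (bary_pt a b c m1 m2 m3).
Proof.
  intros H1 H2 H3 Hs Hz. set (p := bary_pt a b c m1 m2 m3). split.
  - intros eps He. set (q := centroid a b c). pose proof (dist_ge0 p q) as Hd.
    set (eta := Rmin 1 (eps / (2 * (dist p q + 1)))).
    assert (0 < eps / (2 * (dist p q + 1))) by (apply Rdiv_lt_0_compat; lra).
    assert (0 < eta) by (apply Rmin_glb_lt; lra).
    assert (eta <= 1) by apply Rmin_l.
    assert (Heta : eta * (2 * (dist p q + 1)) <= eps).
    { pose proof (Rmin_r 1 (eps / (2 * (dist p q + 1)))) as Hr. fold eta in Hr.
      apply Rmult_le_compat_r with (r := 2 * (dist p q + 1)) in Hr; [|lra].
      replace (eps / (2 * (dist p q + 1)) * (2 * (dist p q + 1))) with eps in Hr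
        by (field; lra). exact Hr. }
    exists (segment p q eta). split.
    + exists ((1 - eta) * m1 + eta / 3), ((1 - eta) * m2 + eta / 3), ((1 - eta) * m3 + eta / 3).
      repeat split; try nra; unfold segment, p, q, centroid, bary_pt; cbn [fst snd]; field.
    + rewrite dist_segment_start, Rabs_pos_eq by lra. nra.
  - intros Hp. apply open_triangle_bary in Hp.
    destruct (bary_pt_coords m1 m2 m3 Hs) as (E1 & E2 & E3). fold p in E1, E2, E3. lra.
Qed.

Lemma vertex_boundary : boundary G a.
Proof.
  assert (Ha : bary_pt a b c 1 0 0 = a)
    by (unfold bary_pt; destruct a; cbn [fst snd]; f_equal; ring).
  pose proof (boundary_bary_pt 1 0 0) as Hb. rewrite Ha in Hb. apply Hb; lra.
Qed.

Lemma dG_le_dist z y : boundary G y -> dG G z <= dist z y.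
Proof.
  intros Hy. apply Rinf_lb; [|exists y; auto].
  exists 0. intros r (y' & _ & ->). apply dist_ge0.
Qed.

Definition bary_lip :=
  (Rabs (snd b - snd c) + Rabs (fst c - fst b) + Rabs (snd c - snd a) + Rabs (fst a - fst c)
   + Rabs (snd a - snd b) + Rabs (fst b - fst a)) / Rabs (cross a b c) + 1.

Lemma bary_lip_ge1 : 1 <= bary_lip.
Proof.
  unfold bary_lip. pose proof (Rabs_pos_lt _ nondeg).
  enough (0 <= (Rabs (snd b - snd c) + Rabs (fst c - fst b) + Rabs (snd c - snd a)
    + Rabs (fst a - fst c) + Rabs (snd a - snd b) + Rabs (fst b - fst a)) / Rabs (cross a b c))
    by lra.
  unfold Rdiv. apply Rmult_le_pos; [|left; apply Rinv_0_lt_compat, H].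
  repeat apply Rplus_le_le_0_compat; apply Rabs_pos.
Qed.

Lemma Rabs_bary_diff_le u v (w z : pt) : Rabs u + Rabs v <= (bary_lip - 1) * Rabs (cross a b c) ->
  Rabs ((u * (fst w - fst z) + v * (snd w - snd z)) / cross a b c) <= bary_lip * dist w z.
Proof.
  intros Huv. pose proof (Rabs_pos_lt _ nondeg). pose proof (dist_ge0 w z).
  pose proof bary_lip_ge1.
  unfold Rdiv. rewrite Rabs_mult, Rabs_inv. apply Rdiv_le_of_le_mul; [exact H|].
  eapply Rle_trans; [apply Rabs_linear_form_le|]. nra.
Qed.

Lemma bary_lipschitz w z :
  Rabs (bary1 a b c w - bary1 a b c z) <= bary_lip * dist w z /\
  Rabs (bary2 a b c w - bary2 a b c z) <= bary_lip * dist w z /\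
  Rabs (bary3 a b c w - bary3 a b c z) <= bary_lip * dist w z.
Proof.
  assert (HL : (bary_lip - 1) * Rabs (cross a b c) =
     Rabs (snd b - snd c) + Rabs (fst c - fst b) + Rabs (snd c - snd a) + Rabs (fst a - fst c)
     + Rabs (snd a - snd b) + Rabs (fst b - fst a))
    by (unfold bary_lip; field; apply Rabs_no_R0, nondeg).
  pose proof (Rabs_pos (snd b - snd c)). pose proof (Rabs_pos (fst c - fst b)).
  pose proof (Rabs_pos (snd c - snd a)). pose proof (Rabs_pos (fst a - fst c)).
  pose proof (Rabs_pos (snd a - snd b)). pose proof (Rabs_pos (fst b - fst a)).
  unfold bary1, bary2, bary3. repeat split.
  - replace (cross w b c / cross a b c - cross z b c / cross a b c) with
      (((snd b - snd c) * (fst w - fst z) + (fst c - fst b) * (snd w - snd z)) / cross a b c)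
      by (unfold cross; field; exact nondeg).
    apply Rabs_bary_diff_le. lra.
  - replace (cross a w c / cross a b c - cross a z c / cross a b c) with
      (((snd c - snd a) * (fst w - fst z) + (fst a - fst c) * (snd w - snd z)) / cross a b c)
      by (unfold cross; field; exact nondeg).
    apply Rabs_bary_diff_le. lra.
  - replace (cross a b w / cross a b c - cross a b z / cross a b c) with
      (((snd a - snd b) * (fst w - fst z) + (fst b - fst a) * (snd w - snd z)) / cross a b c)
      by (unfold cross; field; exact nondeg).
    apply Rabs_bary_diff_le. lra.
Qed.

Definition bary_min z := Rmin (bary1 a b c z) (Rmin (bary2 a b c z) (bary3 a b c z)).

Lemma bary_min_le z :
  bary_min z <= bary1 a b c z /\ bary_min z <= bary2 a b c z /\ bary_min z <= bary3 a b c z.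
Proof.
  unfold bary_min. pose proof (Rmin_l (bary1 a b c z) (Rmin (bary2 a b c z) (bary3 a b c z))).
  pose proof (Rmin_r (bary1 a b c z) (Rmin (bary2 a b c z) (bary3 a b c z))).
  pose proof (Rmin_l (bary2 a b c z) (bary3 a b c z)).
  pose proof (Rmin_r (bary2 a b c z) (bary3 a b c z)). lra.
Qed.

Lemma bary_min_pos z : G z -> 0 < bary_min z.
Proof.
  intros Hz. apply open_triangle_bary in Hz. unfold bary_min.
  repeat apply Rmin_glb_lt; tauto.
Qed.

Lemma open_triangle_near z w : G z -> bary_lip * dist z w < bary_min z -> G w.
Proof.
  intros Hz Hd. rewrite dist_sym in Hd.
  destruct (bary_lipschitz w z) as (L1 & L2 & L3). destruct (bary_min_le z) as (M1 & M2 & M3).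
  apply Rabs_le_between in L1, L2, L3. apply open_triangle_bary.
  pose proof bary_lip_ge1. pose proof (dist_ge0 w z). repeat split; nra.
Qed.

Lemma dG_ge_bary_min z : G z -> bary_min z / bary_lip <= dG G z.
Proof.
  intros Hz. pose proof bary_lip_ge1. apply Rinf_glb.
  - exists (dist z a), a. split; [exact vertex_boundary | reflexivity].
  - intros r (y & [_ Hy] & ->). apply Rdiv_le_of_le_mul; [lra|].
    destruct (Rlt_or_le (bary_lip * dist z y) (bary_min z)) as [Hl|Hl]; [|lra].
    exfalso. exact (Hy (open_triangle_near z y Hz Hl)).
Qed.

Lemma dG_pos z : G z -> 0 < dG G z.
Proof.
  intros Hz. eapply Rlt_le_trans; [|apply dG_ge_bary_min, Hz].
  pose proof bary_lip_ge1. apply Rdiv_lt_0_compat; [apply bary_min_pos, Hz | lra].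
Qed.

End Triangle.

Lemma cross_rot a b c : cross b c a = cross a b c.
Proof. unfold cross. ring. Qed.

Lemma cross_swap a b c : cross a c b = - cross a b c.
Proof. unfold cross. ring. Qed.

Lemma open_triangle_rot a b c : open_triangle b c a = open_triangle a b c.
Proof.
  apply functional_extensionality. intro x. apply propositional_extensionality.
  split; intros (l1 & l2 & l3 & H1 & H2 & H3 & Hs & Hx & Hy).
  - exists l3, l1, l2. repeat split; auto; lra.
  - exists l2, l3, l1. repeat split; auto; lra.
Qed.

Lemma open_triangle_swap a b c : open_triangle a c b = open_triangle a b c.
Proof.
  apply functional_extensionality. intro x. apply propositional_extensionality.
  split; intros (l1 & l2 & l3 & H1 & H2 & H3 & Hs & Hx & Hy);
    exists l1, l3, l2; repeat split; auto; lra.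
Qed.

Definition angle_cos (a b c : pt) :=
  ((fst b - fst a) * (fst c - fst a) + (snd b - snd a) * (snd c - snd a)) / (dist a b * dist a c).

Lemma angle_cos_swap a b c : angle_cos a c b = angle_cos a b c.
Proof. unfold angle_cos. rewrite (Rmult_comm (dist a c)). f_equal. ring. Qed.

Lemma dist_pos_of_cross a b c : cross a b c <> 0 -> 0 < dist a b /\ 0 < dist a c.
Proof.
  intros HD. pose proof (dist_ge0 a b). pose proof (dist_ge0 a c).
  pose proof (dist_sq a b). pose proof (dist_sq a c).
  pose proof (pow2_ge_0 (fst a - fst b)). pose proof (pow2_ge_0 (snd a - snd b)).
  pose proof (pow2_ge_0 (fst a - fst c)). pose proof (pow2_ge_0 (snd a - snd c)).
  split; apply Rnot_le_lt; intros Hle; apply HD.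
  - assert (fst a - fst b = 0) by nra. assert (snd a - snd b = 0) by nra. unfold cross. nra.
  - assert (fst a - fst c = 0) by nra. assert (snd a - snd c = 0) by nra. unfold cross. nra.
Qed.

(* Lagrange's identity |u|^2 |w|^2 = (u.w)^2 + (u x w)^2. *)
Lemma angle_cos_bounds a b c : cross a b c <> 0 -> -1 < angle_cos a b c < 1.
Proof.
  intros HD. destruct (dist_pos_of_cross a b c HD) as [H1 H2].
  set (P := (fst b - fst a) * (fst c - fst a) + (snd b - snd a) * (snd c - snd a)).
  set (L := dist a b * dist a c).
  assert (HL : L * L = P * P + cross a b c * cross a b c).
  { replace (L * L) with ((dist a b * dist a b) * (dist a c * dist a c)) by (unfold L; ring).
    rewrite !dist_sq. unfold P, cross. ring. }
  assert (0 < cross a b c * cross a b c) by (apply Rsqr_pos_lt; auto).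
  assert (0 < L) by (apply Rmult_lt_0_compat; auto).
  assert (HC : angle_cos a b c * L = P) by (unfold angle_cos; fold P L; field; lra).
  set (C := angle_cos a b c) in *.
  assert (C * C < 1) by (apply Rmult_lt_reg_r with (L * L); nra).
  split; nra.
Qed.

Lemma sin_half_angle a b c : cross a b c <> 0 ->
  sin (angle_at a b c / 2) = sqrt ((1 - angle_cos a b c) / 2).
Proof.
  intros HD. pose proof (angle_cos_bounds a b c HD).
  unfold angle_at. fold (angle_cos a b c).
  set (th := acos (angle_cos a b c)).
  assert (0 <= th <= PI) by apply acos_bound.
  assert (cos th = angle_cos a b c) by (apply cos_acos; lra).
  pose proof (cos_2a_sin (th / 2)). replace (2 * (th / 2)) with th in * by field.
  assert (0 <= sin (th / 2)) by (apply sin_ge_0; pose proof PI_RGT_0; lra).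
  symmetry. apply sqrt_lem_1; nra.
Qed.

Lemma sin_half_angle_pos a b c : cross a b c <> 0 -> 0 < sin (angle_at a b c / 2).
Proof.
  intros HD. rewrite sin_half_angle by exact HD. pose proof (angle_cos_bounds a b c HD).
  apply sqrt_lt_R0. lra.
Qed.

(* The vector v = l2 u + l3 w, with |l2 u| <= |l3 w| and |v| <= |w|, projects orthogonally
   onto the segment [0, w], at distance |v| sin(theta/2) at most, theta the angle of u, w.
   With s = l2|u|, t = l3|w|, the distance is s^2 (1 - C^2), and
   (s^2 + t^2 + 2stC)(1 - C)/2 - s^2(1 - C^2) = (1 - C)(t - s)(t + s + 2sC)/2 >= 0. *)
Lemma segment_projection_le x1 y1 x2 y2 L1 L2 C l2 l3 :
  0 < L1 -> 0 < L2 -> L1 * L1 = x1 ^ 2 + y1 ^ 2 -> L2 * L2 = x2 ^ 2 + y2 ^ 2 ->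
  C * (L1 * L2) = x1 * x2 + y1 * y2 -> -1 <= C <= 1 -> 0 <= l2 -> l2 * L1 <= l3 * L2 ->
  (l2 * x1 + l3 * x2) ^ 2 + (l2 * y1 + l3 * y2) ^ 2 <= L2 * L2 ->
  let vx := l2 * x1 + l3 * x2 in let vy := l2 * y1 + l3 * y2 in
  let tau := (vx * x2 + vy * y2) / (L2 * L2) in
  0 <= tau <= 1 /\
  (vx - tau * x2) ^ 2 + (vy - tau * y2) ^ 2 <= (vx ^ 2 + vy ^ 2) * (1 - C) / 2.
Proof.
  intros HL1 HL2 E1 E2 EC [HC1 HC2] Hl2 Hst Hv vx vy tau.
  set (s := l2 * L1) in *. set (t := l3 * L2) in *.
  assert (Hdot : vx * x2 + vy * y2 = L2 * (s * C + t)).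
  { replace (vx * x2 + vy * y2) with (l2 * (x1 * x2 + y1 * y2) + l3 * (x2 ^ 2 + y2 ^ 2))
      by (unfold vx, vy; ring).
    rewrite <- EC, <- E2. unfold s, t. ring. }
  assert (Hnorm : vx ^ 2 + vy ^ 2 = s ^ 2 + t ^ 2 + 2 * s * t * C).
  { replace (vx ^ 2 + vy ^ 2) with (l2 ^ 2 * (x1 ^ 2 + y1 ^ 2) + l3 ^ 2 * (x2 ^ 2 + y2 ^ 2)
      + 2 * l2 * l3 * (x1 * x2 + y1 * y2)) by (unfold vx, vy; ring).
    rewrite <- EC, <- E1, <- E2. unfold s, t. ring. }
  assert (Htau : tau * L2 = s * C + t) by (unfold tau; rewrite Hdot; field; lra).
  assert (Hs : 0 <= s) by (unfold s; nra).
  assert (Hcs : (vx * x2 + vy * y2) ^ 2 <= (vx ^ 2 + vy ^ 2) * (x2 ^ 2 + y2 ^ 2))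
    by (pose proof (pow2_ge_0 (vx * y2 - vy * x2)); nra).
  rewrite <- E2, Hdot in Hcs. fold vx vy in Hv.
  assert (Hdot0 : 0 <= s * C + t) by (assert (0 <= C + 1) by lra; pose proof (Rmult_le_pos s (C + 1) Hs H); lra).
  split; [split|].
  - apply Rmult_le_reg_r with L2; [exact HL2|]. rewrite Htau. lra.
  - apply Rmult_le_reg_r with L2; [exact HL2|]. rewrite Htau.
    assert (Hsq : (s * C + t) ^ 2 * (L2 * L2) <= (L2 * L2) * (L2 * L2)).
    { replace ((s * C + t) ^ 2 * (L2 * L2)) with ((L2 * (s * C + t)) ^ 2) by ring.
      eapply Rle_trans; [exact Hcs|]. apply Rmult_le_compat_r; nra. }
    assert ((s * C + t) ^ 2 <= L2 * L2) by (apply Rmult_le_reg_r with (L2 * L2); nra).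
    nra.
  - replace ((vx - tau * x2) ^ 2 + (vy - tau * y2) ^ 2) with
      ((vx ^ 2 + vy ^ 2) - 2 * tau * (vx * x2 + vy * y2) + tau ^ 2 * (x2 ^ 2 + y2 ^ 2)) by ring.
    rewrite <- E2, Hdot, Hnorm.
    replace (s ^ 2 + t ^ 2 + 2 * s * t * C - 2 * tau * (L2 * (s * C + t)) + tau ^ 2 * (L2 * L2))
      with (s ^ 2 * (1 - C ^ 2) + (tau * L2 - (s * C + t)) ^ 2) by ring.
    rewrite Htau.
    assert (0 <= (t - s) * (t + s + 2 * s * C)) by (apply Rmult_le_pos; nra).
    nra.
Qed.

(* The foot of the perpendicular from z to the edge [a, c] lies on that edge. *)
Lemma dG_le_half_angle_of_le a b c z l1 l2 l3 : cross a b c <> 0 ->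
  0 < l1 -> 0 < l2 -> 0 < l3 -> l1 + l2 + l3 = 1 ->
  fst z = l1 * fst a + l2 * fst b + l3 * fst c -> snd z = l1 * snd a + l2 * snd b + l3 * snd c ->
  l2 * dist a b <= l3 * dist a c -> dist a z <= dist a c ->
  dG (open_triangle a b c) z <= dist a z * sqrt ((1 - angle_cos a b c) / 2).
Proof.
  intros HD H1 H2 H3 Hs Hx Hy Hle Hr.
  destruct (dist_pos_of_cross a b c HD) as [HL1 HL2].
  pose proof (angle_cos_bounds a b c HD) as HC.
  set (x1 := fst b - fst a). set (y1 := snd b - snd a).
  set (x2 := fst c - fst a). set (y2 := snd c - snd a).
  assert (Hvx : fst z - fst a = l2 * x1 + l3 * x2)
    by (unfold x1, x2; rewrite Hx; replace l1 with (1 - l2 - l3) by lra; ring).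
  assert (Hvy : snd z - snd a = l2 * y1 + l3 * y2)
    by (unfold y1, y2; rewrite Hy; replace l1 with (1 - l2 - l3) by lra; ring).
  assert (Hr2 : dist a z * dist a z = (l2 * x1 + l3 * x2) ^ 2 + (l2 * y1 + l3 * y2) ^ 2)
    by (rewrite dist_sym, dist_sq, Hvx, Hvy; reflexivity).
  pose proof (segment_projection_le x1 y1 x2 y2 (dist a b) (dist a c) (angle_cos a b c) l2 l3
    HL1 HL2) as Hfoot.
  cbv zeta in Hfoot. destruct Hfoot as [Htau Hfoot].
  - rewrite dist_sq. unfold x1, y1. ring.
  - rewrite dist_sq. unfold x2, y2. ring.
  - unfold angle_cos. fold x1 y1 x2 y2. field. lra.
  - lra.
  - lra.
  - exact Hle.
  - rewrite <- Hr2. pose proof (dist_ge0 a z). nra.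
  - set (tau := ((l2 * x1 + l3 * x2) * x2 + (l2 * y1 + l3 * y2) * y2) / (dist a c * dist a c))
      in *.
    set (p := bary_pt a b c (1 - tau) 0 tau).
    eapply Rle_trans; [apply (dG_le_dist a b c z p), boundary_bary_pt; auto; lra|].
    assert (Hpx : fst z - fst p = l2 * x1 + l3 * x2 - tau * x2)
      by (rewrite <- Hvx; unfold p, bary_pt, x2; cbn [fst snd]; ring).
    assert (Hpy : snd z - snd p = l2 * y1 + l3 * y2 - tau * y2)
      by (rewrite <- Hvy; unfold p, bary_pt, y2; cbn [fst snd]; ring).
    apply dist_le_mul_sqrt; [apply dist_ge0 | lra |].
    rewrite Hr2, dist_sq, Hpx, Hpy. lra.
Qed.

(* Near a vertex the triangle looks like a sector: the nearer of the two edges is within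
   |az| sin(alpha/2) of z. *)
Lemma dG_le_vertex_half_angle a b c z : cross a b c <> 0 -> open_triangle a b c z ->
  dist a z <= Rmin (dist a b) (dist a c) ->
  dG (open_triangle a b c) z <= dist a z * sin (angle_at a b c / 2).
Proof.
  intros HD Hz Hr. rewrite sin_half_angle by exact HD.
  pose proof (Rmin_l (dist a b) (dist a c)). pose proof (Rmin_r (dist a b) (dist a c)).
  destruct Hz as (l1 & l2 & l3 & H1 & H2 & H3 & Hs & Hx & Hy).
  destruct (Rle_or_lt (l2 * dist a b) (l3 * dist a c)).
  - apply dG_le_half_angle_of_le with l1 l2 l3; auto; lra.
  - rewrite <- open_triangle_swap, <- angle_cos_swap.
    apply dG_le_half_angle_of_le with l1 l3 l2; auto; try lra.
    rewrite cross_swap. intro E. apply HD. lra.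
Qed.

Definition inv_dG_inf (G : pt -> Prop) (g : R -> pt) (u v : R) : R :=
  Rinf (fun w => exists t, u <= t <= v /\ w = / dG G (g t)).

Section CurveInTriangle.

Variables (a b c : pt) (g : R -> pt) (M : R).
Hypotheses (nondeg : cross a b c <> 0) (g_cont : curve_continuous g)
  (g_in : forall t, 0 <= t <= 1 -> open_triangle a b c (g t))
  (chord_sum_le : forall n p, partition 0 1 n p -> chord_sum g n p <= M).

Let G := open_triangle a b c.

(* A curve stays away from the boundary: its barycentric coordinates are continuous and
   positive on [0, 1]. *)
Lemma dG_curve_lb : exists delta, 0 < delta /\ forall t, 0 <= t <= 1 -> delta <= dG G (g t).
Proof.
  pose proof (bary_lip_ge1 a b c nondeg) as HK.
  assert (Hc : forall bary : pt -> R,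
      (forall w z, Rabs (bary w - bary z) <= bary_lip a b c * dist w z) ->
      (forall x, G x -> 0 < bary x) ->
      exists d, 0 < d /\ forall t, 0 <= t <= 1 -> d <= bary (g t)).
  { intros bary Hlip Hpos. apply continuous01_pos_lb.
    - apply continuous01_lipschitz_comp with (bary_lip a b c); auto. lra.
    - intros t Ht. apply Hpos, g_in, Ht. }
  destruct (Hc (bary1 a b c)) as (d1 & Hd1 & B1);
    [intros; apply bary_lipschitz, nondeg | intros x Hx; apply open_triangle_bary in Hx; auto; tauto|].
  destruct (Hc (bary2 a b c)) as (d2 & Hd2 & B2);
    [intros; apply bary_lipschitz, nondeg | intros x Hx; apply open_triangle_bary in Hx; auto; tauto|].
  destruct (Hc (bary3 a b c)) as (d3 & Hd3 & B3);
    [intros; apply bary_lipschitz, nondeg | intros x Hx; apply open_triangle_bary in Hx; auto; tauto|].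
  exists (Rmin d1 (Rmin d2 d3) / bary_lip a b c). split.
  - apply Rdiv_lt_0_compat; [repeat apply Rmin_glb_lt; auto | lra].
  - intros t Ht. eapply Rle_trans; [|apply dG_ge_bary_min, g_in, Ht; exact nondeg].
    apply Rmult_le_compat_r; [left; apply Rinv_0_lt_compat; lra|].
    unfold bary_min. pose proof (Rmin_l d1 (Rmin d2 d3)). pose proof (Rmin_r d1 (Rmin d2 d3)).
    pose proof (Rmin_l d2 d3). pose proof (Rmin_r d2 d3).
    pose proof (B1 t Ht). pose proof (B2 t Ht). pose proof (B3 t Ht).
    repeat apply Rmin_glb; lra.
Qed.

Lemma inv_dG_pos t : 0 <= t <= 1 -> 0 < / dG G (g t).
Proof. intros Ht. apply Rinv_0_lt_compat, dG_pos, g_in, Ht. exact nondeg. Qed.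

Lemma inv_dG_inf_bounds u v : 0 <= u -> u <= v -> v <= 1 ->
  0 <= inv_dG_inf G g u v <= / dG G (g u).
Proof.
  intros Hu Huv Hv. split.
  - apply Rinf_glb; [exists (/ dG G (g u)), u; split; [lra | reflexivity]|].
    intros w (t & Ht & ->). left. apply inv_dG_pos. lra.
  - apply Rinf_lb; [|exists u; split; [lra | reflexivity]].
    exists 0. intros w (t & Ht & ->). left. apply inv_dG_pos. lra.
Qed.

Lemma inv_dG_inf_ge u v B : 0 <= u -> u <= v -> v <= 1 ->
  (forall t, u <= t <= v -> dG G (g t) <= B) -> / B <= inv_dG_inf G g u v.
Proof.
  intros Hu Huv Hv HB. apply Rinf_glb; [exists (/ dG G (g u)), u; split; [lra | reflexivity]|].
  intros w (t & Ht & ->). apply Rinv_le_contravar; [apply dG_pos, g_in; auto; lra | auto].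
Qed.

Lemma qh_length_ge_sum n p : partition 0 1 n p ->
  rsum n (fun i => inv_dG_inf G g (p i) (p (S i)) * arclen g (p i) (p (S i)))
  <= qh_length G g.
Proof.
  intros Hp. destruct dG_curve_lb as (delta & Hdelta & Hlb).
  apply Rsup_ub; [|exists n, p; split; [exact Hp | reflexivity]].
  exists (/ delta * M). intros L (n' & p' & Hp' & ->).
  apply Rle_trans with (rsum n' (fun i => / delta * arclen g (p' i) (p' (S i)))).
  - apply rsum_le. intros i Hi.
    pose proof (partition_range _ _ _ _ Hp' i ltac:(lia)).
    pose proof (partition_range _ _ _ _ Hp' (S i) ltac:(lia)).
    destruct Hp' as (_ & _ & Hm). pose proof (Hm i Hi).
    destruct (inv_dG_inf_bounds (p' i) (p' (S i)) ltac:(lra) ltac:(lra) ltac:(lra)).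
    destruct (arclen_bounds g M chord_sum_le (p' i) (p' (S i)) ltac:(lra) ltac:(lra) ltac:(lra)).
    pose proof (dist_ge0 (g (p' i)) (g (p' (S i)))).
    assert (/ dG G (g (p' i)) <= / delta)
      by (apply Rinv_le_contravar; [exact Hdelta | apply Hlb; split; lra]).
    change (inv_dG_inf G g (p' i) (p' (S i)) * arclen g (p' i) (p' (S i))
            <= / delta * arclen g (p' i) (p' (S i))).
    apply Rmult_le_compat_r; lra.
  - rewrite rsum_scale. apply Rmult_le_compat_l; [left; apply Rinv_0_lt_compat, Hdelta|].
    eapply Rle_trans; [apply (rsum_arclen_le g M chord_sum_le n' 0 1 p'); auto; lra|].
    apply (arclen_bounds g M chord_sum_le 0 1); lra.
Qed.

(* The piece has length at least q rho - rho, and 1 / dG >= 1 / (q rho s) along it. *)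
Lemma annulus_term_ge v s u w rho q : 0 <= u -> u <= w -> w <= 1 -> 0 < rho -> 1 < q -> 0 < s ->
  (forall t, u <= t <= w -> dG G (g t) <= dist v (g t) * s) ->
  (forall t, u <= t <= w -> dist v (g t) <= q * rho) ->
  q * rho - rho <= dist (g u) (g w) ->
  (1 - / q) / s <= inv_dG_inf G g u w * arclen g u w.
Proof.
  intros Hu Huw Hw Hr Hq Hs Hv Hd Hcross.
  assert (I : / (q * rho * s) <= inv_dG_inf G g u w).
  { apply inv_dG_inf_ge; auto. intros t Ht. eapply Rle_trans; [apply Hv, Ht|].
    apply Rmult_le_compat_r; [lra | apply Hd, Ht]. }
  destruct (arclen_bounds g M chord_sum_le u w Hu Huw Hw) as [A _].
  assert (0 < / (q * rho * s)) by (apply Rinv_0_lt_compat, Rmult_lt_0_compat; nra).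
  replace ((1 - / q) / s) with (/ (q * rho * s) * (q * rho - rho)) by (field; lra).
  assert (0 <= q * rho - rho) by nra.
  apply Rmult_le_compat; lra.
Qed.

Section Annuli.

Variables (v : pt) (sv q rad : R) (N : nat).
Hypotheses (sv_pos : 0 < sv) (q_gt1 : 1 < q) (rad_pos : 0 < rad)
  (vertex_bound : forall z, G z -> dist v z <= rad -> dG G z <= dist v z * sv).

Definition level (k : nat) := rad * q ^ k / q ^ N.

Lemma level_pos k : 0 < level k.
Proof.
  unfold level. apply Rdiv_lt_0_compat; [apply Rmult_lt_0_compat; [lra|]|]; apply pow_lt; lra.
Qed.

Lemma level_S k : level (S k) = q * level k.
Proof. unfold level. simpl. field. apply pow_nonzero. lra. Qed.

Lemma level_le k : (k <= N)%nat -> level k <= rad.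
Proof.
  intros Hk. unfold level. pose proof (pow_lt q N ltac:(lra)).
  apply Rdiv_le_of_le_mul; [lra|]. apply Rmult_le_compat_l; [lra|]. apply Rle_pow; [lra | exact Hk].
Qed.

Lemma level_N : level N = rad.
Proof. unfold level. field. apply pow_nonzero. lra. Qed.

Lemma level_mono k : level k <= level (S k).
Proof. rewrite level_S. pose proof (level_pos k). nra. Qed.

Lemma annulus_level_term_ge u w k : (k < N)%nat -> 0 <= u -> u <= w -> w <= 1 ->
  (forall t, u <= t <= w -> dist v (g t) <= level (S k)) ->
  level (S k) - level k <= dist (g u) (g w) ->
  (1 - / q) / sv <= inv_dG_inf G g u w * arclen g u w.
Proof.
  intros Hk Hu Huw Hw Hin Hcross. pose proof (level_le (S k) Hk) as Hrad.
  rewrite level_S in Hin, Hcross, Hrad.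
  apply annulus_term_ge with v (level k); auto using level_pos.
  intros t Ht. apply vertex_bound; [apply g_in; split; lra|]. pose proof (Hin t Ht). lra.
Qed.

Lemma annuli_sum_ge (tau : nat -> R) : partition 0 (tau N) N tau -> tau N <= 1 ->
  (forall k, (k <= N)%nat ->
     dist v (g (tau k)) = level k /\ forall t, 0 <= t <= tau k -> dist v (g t) <= level k) ->
  INR N * ((1 - / q) / sv) <=
  rsum N (fun i => inv_dG_inf G g (tau i) (tau (S i)) * arclen g (tau i) (tau (S i))).
Proof.
  intros Hp HN Hlev. rewrite <- rsum_const. apply rsum_le. intros k Hk.
  pose proof (partition_range _ _ _ _ Hp k ltac:(lia)).
  pose proof (partition_range _ _ _ _ Hp (S k) ltac:(lia)).
  destruct Hp as (_ & _ & Hm). pose proof (Hm k Hk).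
  destruct (Hlev k ltac:(lia)) as [Ek _]. destruct (Hlev (S k) Hk) as [ESk Hin].
  apply annulus_level_term_ge with k; auto; try lra.
  - intros t Ht. apply Hin. split; lra.
  - pose proof (dist_reverse_triangle v (g (tau (S k))) (g (tau k))) as Hrev.
    rewrite dist_sym. apply Rabs_le_between in Hrev. lra.
Qed.

Lemma annuli_sum_rev_ge (sigma : nat -> R) : partition 0 (sigma N) N sigma -> sigma N <= 1 ->
  (forall k, (k <= N)%nat ->
     dist v (g (1 - sigma k)) = level k /\
     forall t, 0 <= t <= sigma k -> dist v (g (1 - t)) <= level k) ->
  INR N * ((1 - / q) / sv) <=
  rsum N (fun i => inv_dG_inf G g (rev_part N sigma i) (rev_part N sigma (S i))
                   * arclen g (rev_part N sigma i) (rev_part N sigma (S i))).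
Proof.
  intros Hp HN Hlev. rewrite <- rsum_const. apply rsum_le. intros i Hi.
  unfold rev_part. set (k := (N - S i)%nat). replace (N - i)%nat with (S k) by (unfold k; lia).
  pose proof (partition_range _ _ _ _ Hp k ltac:(unfold k; lia)).
  pose proof (partition_range _ _ _ _ Hp (S k) ltac:(unfold k; lia)).
  destruct Hp as (_ & _ & Hm). pose proof (Hm k ltac:(unfold k; lia)).
  destruct (Hlev k ltac:(unfold k; lia)) as [Ek _].
  destruct (Hlev (S k) ltac:(unfold k; lia)) as [ESk Hin].
  apply annulus_level_term_ge with k; try (unfold k; lia); try lra.
  - intros t Ht. replace t with (1 - (1 - t)) by ring. apply Hin. split; lra.
  - pose proof (dist_reverse_triangle v (g (1 - sigma (S k))) (g (1 - sigma k))) as Hrev.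
    apply Rabs_le_between in Hrev. lra.
Qed.

End Annuli.

Lemma qh_length_ge_two_sums N (tau sigma : nat -> R) :
  partition 0 (tau N) N tau -> partition 0 (sigma N) N sigma -> tau N <= 1 - sigma N ->
  rsum N (fun i => inv_dG_inf G g (tau i) (tau (S i)) * arclen g (tau i) (tau (S i))) +
  rsum N (fun i => inv_dG_inf G g (rev_part N sigma i) (rev_part N sigma (S i))
                   * arclen g (rev_part N sigma i) (rev_part N sigma (S i)))
  <= qh_length G g.
Proof.
  intros Ptau Psig Hmid.
  pose proof (partition_bounds_le _ _ _ _ Ptau). pose proof (partition_bounds_le _ _ _ _ Psig).
  pose proof (partition_concat _ _ _ _ _ _ _ (partition_pair _ _ Hmid) (partition_rev N sigma _ Psig))
    as P2.
  pose proof (qh_length_ge_sum _ _ (partition_concat _ _ _ _ _ _ _ Ptau P2)) as Hsum.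
  rewrite (rsum_concat (fun u v => inv_dG_inf G g u v * arclen g u v)) in Hsum by reflexivity.
  rewrite (rsum_concat (fun u v => inv_dG_inf G g u v * arclen g u v)) in Hsum
    by (unfold rev_part; simpl; rewrite Nat.sub_0_r; ring).
  simpl rsum at 2 in Hsum.
  destruct (inv_dG_inf_bounds (tau N) (1 - sigma N)) as [I0 _]; try lra.
  destruct (arclen_bounds g M chord_sum_le (tau N) (1 - sigma N)) as [A0 _]; try lra.
  pose proof (dist_ge0 (g (tau N)) (g (1 - sigma N))).
  assert (0 <= inv_dG_inf G g (tau N) (1 - sigma N) * arclen g (tau N) (1 - sigma N))
    by (apply Rmult_le_pos; lra).
  lra.
Qed.

End CurveInTriangle.

Lemma curve_continuous_reflect g : curve_continuous g -> curve_continuous (fun t => g (1 - t)).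
Proof.
  intros Hg t Ht eps He. destruct (Hg (1 - t) ltac:(lra) eps He) as (d & Hd & Hs).
  exists d. split; [exact Hd|]. intros s Hs1 Hs2. apply Hs; [lra|].
  replace (1 - s - (1 - t)) with (- (s - t)) by ring. rewrite Rabs_Ropp. exact Hs2.
Qed.

Lemma continuous01_dist v g : curve_continuous g -> continuous01 (fun t => dist v (g t)).
Proof.
  intros Hg. apply continuous01_lipschitz_comp with 1; [exact Hg | lra|].
  intros u w. rewrite Rmult_1_l. apply dist_reverse_triangle.
Qed.

Lemma curve_annuli_crossings v g q rad N : curve_continuous g -> 1 < q -> 0 < rad ->
  dist v (g 0) = rad / q ^ N -> rad <= dist v (g 1) ->
  exists tau : nat -> R, partition 0 (tau N) N tau /\ tau N <= 1 /\
    forall k, (k <= N)%nat -> dist v (g (tau k)) = level q rad N k /\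
      forall t, 0 <= t <= tau k -> dist v (g t) <= level q rad N k.
Proof.
  intros Hc Hq Hrad H0 H1. apply (level_crossings (fun t => dist v (g t))).
  - apply continuous01_dist, Hc.
  - intros k. apply level_mono; lra.
  - rewrite H0. unfold level. rewrite pow_O, Rmult_1_r. reflexivity.
  - exists 1. split; [lra|]. rewrite level_N; lra.
Qed.

(* The curve crosses N annuli around a before it first leaves the disc of radius rad about a,
   and N annuli around b after it last enters the one about b; these two parts are disjoint
   because 2 rad < |ab|. *)
Lemma qh_length_ge_annuli a b c x y g q N rad :
  cross a b c <> 0 -> 1 < q -> 0 < rad -> 2 * rad < dist a b ->
  rad <= Rmin (dist a b) (dist a c) -> rad <= Rmin (dist b c) (dist b a) ->
  dist a x = rad / q ^ N -> dist b y = rad / q ^ N ->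
  joins_in (open_triangle a b c) x y g ->
  INR N * ((1 - / q) * (/ sin (angle_at a b c / 2) + / sin (angle_at b c a / 2)))
  <= qh_length (open_triangle a b c) g.
Proof.
  intros HD Hq Hrad H2rad Ha Hb Hx Hy (Hc & [M HM] & Hg0 & Hg1 & Hin).
  assert (HDb : cross b c a <> 0) by (rewrite cross_rot; exact HD).
  pose proof (sin_half_angle_pos a b c HD) as HSa. pose proof (sin_half_angle_pos b c a HDb) as HSb.
  set (Sa := sin (angle_at a b c / 2)) in *. set (Sb := sin (angle_at b c a / 2)) in *.
  assert (VA : forall z, open_triangle a b c z -> dist a z <= rad ->
                 dG (open_triangle a b c) z <= dist a z * Sa)
    by (intros z Hz Hz2; apply dG_le_vertex_half_angle; auto; lra).
  assert (VB : forall z, open_triangle a b c z -> dist b z <= rad ->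
                 dG (open_triangle a b c) z <= dist b z * Sb).
  { intros z Hz Hz2. rewrite <- open_triangle_rot.
    apply dG_le_vertex_half_angle; [exact HDb | rewrite open_triangle_rot; exact Hz | lra]. }
  pose proof (dist_triangle a y b). pose proof (dist_triangle b x a).
  rewrite (dist_sym y b), (dist_sym x a), (dist_sym b a) in *.
  assert (rad / q ^ N <= rad)
    by (pose proof (pow_R1_Rle q N ltac:(lra)); apply Rdiv_le_of_le_mul; nra).
  destruct (curve_annuli_crossings a g q rad N Hc Hq Hrad) as (tau & Ptau & HtauN & Ltau);
    [rewrite Hg0; exact Hx | rewrite Hg1; lra|].
  destruct (curve_annuli_crossings b (fun t => g (1 - t)) q rad N) as (sigma & Psig & HsigN & Lsig);
    [apply curve_continuous_reflect, Hc | exact Hq | exact Hrad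
    | rewrite Rminus_0_r, Hg1; exact Hy | rewrite Rminus_diag, Hg0; lra|].
  assert (Hmid : tau N <= 1 - sigma N).
  { destruct (Rle_or_lt (tau N) (1 - sigma N)) as [|Hlt]; [assumption|]. exfalso.
    pose proof (partition_bounds_le _ _ _ _ Ptau).
    destruct (Ltau N (le_n N)) as [Ea _]. destruct (Lsig N (le_n N)) as [_ Hb'].
    pose proof (Hb' (1 - tau N) ltac:(split; lra)) as Hbt. cbv beta in Hbt.
    replace (1 - (1 - tau N)) with (tau N) in Hbt by ring. rewrite level_N in Ea, Hbt by lra.
    pose proof (dist_triangle a (g (tau N)) b). rewrite (dist_sym (g (tau N)) b) in *. lra. }
  pose proof (qh_length_ge_two_sums a b c g M HD Hc Hin HM N tau sigma Ptau Psig Hmid).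
  pose proof (annuli_sum_ge a b c g M HD Hin HM a Sa q rad N HSa Hq Hrad VA tau Ptau HtauN Ltau).
  pose proof (annuli_sum_rev_ge a b c g M HD Hin HM b Sb q rad N HSb Hq Hrad VB
    sigma Psig HsigN Lsig).
  replace (INR N * ((1 - / q) * (/ Sa + / Sb))) with
    (INR N * ((1 - / q) / Sa) + INR N * ((1 - / q) / Sb))
    by (field; repeat split; apply Rgt_not_eq; lra).
  lra.
Qed.

Lemma open_triangle_segment a b c x y t : open_triangle a b c x -> open_triangle a b c y ->
  0 <= t <= 1 -> open_triangle a b c (segment x y t).
Proof.
  intros (l1 & l2 & l3 & Hl1 & Hl2 & Hl3 & Hl & Hx1 & Hx2)
         (m1 & m2 & m3 & Hm1 & Hm2 & Hm3 & Hm & Hy1 & Hy2) Ht.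
  exists ((1 - t) * l1 + t * m1), ((1 - t) * l2 + t * m2), ((1 - t) * l3 + t * m3).
  unfold segment; cbn [fst snd]. rewrite Hx1, Hx2, Hy1, Hy2.
  repeat split; try nra; ring.
Qed.

Lemma segment_joins a b c x y : open_triangle a b c x -> open_triangle a b c y ->
  joins_in (open_triangle a b c) x y (segment x y).
Proof.
  intros Hx Hy. pose proof (dist_ge0 x y).
  split; [|split; [|split; [apply segment0 | split; [apply segment1|]]]].
  - intros t Ht eps He. exists (eps / (dist x y + 1)). split; [apply Rdiv_lt_0_compat; lra|].
    intros s Hs Hst. rewrite dist_segment.
    apply Rle_lt_trans with (eps / (dist x y + 1) * dist x y); [apply Rmult_le_compat_r; lra|].
    apply Rmult_lt_reg_r with (dist x y + 1); [lra|].
    replace (eps / (dist x y + 1) * dist x y * (dist x y + 1)) with (eps * dist x y)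
      by (field; lra). nra.
  - exists (dist x y). intros n p Hp. unfold chord_sum.
    rewrite (eq_rsum n _ (fun i => dist x y * (p (S i) - p i))).
    + rewrite rsum_scale, rsum_telescope. destruct Hp as (-> & -> & _). lra.
    + intros i Hi. rewrite dist_segment. destruct Hp as (_ & _ & Hm). pose proof (Hm i Hi).
      rewrite Rabs_left1 by lra. ring.
  - intros t Ht. apply open_triangle_segment; assumption.
Qed.

Lemma kG_ge_of_curves a b c x y L : open_triangle a b c x -> open_triangle a b c y ->
  (forall g, joins_in (open_triangle a b c) x y g -> L <= qh_length (open_triangle a b c) g) ->
  L <= kG (open_triangle a b c) x y.
Proof.
  intros Hx Hy H. apply Rinf_glb; [|intros w (g & Hg & ->); auto].
  exists (qh_length (open_triangle a b c) (segment x y)), (segment x y).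
  split; [apply segment_joins|]; auto.
Qed.

Lemma jG_le_log G x y q N m D : 0 < m -> 1 < q ->
  m / q ^ N <= dG G x -> m / q ^ N <= dG G y -> dist x y <= D ->
  jG G x y <= ln (1 + D / m) + INR N * ln q.
Proof.
  intros Hm Hq Hx Hy HD. pose proof (pow_lt q N ltac:(lra)) as HqN.
  pose proof (pow_R1_Rle q N ltac:(lra)) as HqN1.
  assert (Hmin : m / q ^ N <= Rmin (dG G x) (dG G y)) by (apply Rmin_glb; assumption).
  assert (Hmq : 0 < m / q ^ N) by (apply Rdiv_lt_0_compat; assumption).
  pose proof (dist_ge0 x y).
  assert (Hratio : dist x y / Rmin (dG G x) (dG G y) <= D / m * q ^ N).
  { replace (D / m * q ^ N) with (D / (m / q ^ N)) by (field; lra).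
    unfold Rdiv. apply Rmult_le_compat; try lra.
    - left. apply Rinv_0_lt_compat. lra.
    - apply Rinv_le_contravar; assumption. }
  assert (0 <= dist x y / Rmin (dG G x) (dG G y))
    by (unfold Rdiv; apply Rmult_le_pos; [lra | left; apply Rinv_0_lt_compat; lra]).
  assert (0 <= D / m) by (unfold Rdiv; apply Rmult_le_pos; [lra | left; apply Rinv_0_lt_compat, Hm]).
  unfold jG. rewrite <- ln_pow, <- ln_mult by lra.
  destruct (Req_dec (1 + dist x y / Rmin (dG G x) (dG G y)) ((1 + D / m) * q ^ N)) as [E|Hne].
  - rewrite E. lra.
  - left. apply ln_increasing; [lra|]. nra.
Qed.

Lemma dG_segment_centroid_ge a b c l : cross a b c <> 0 -> 0 < l <= 1 ->
  open_triangle a b c (segment a (centroid a b c) l) /\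
  l / (3 * bary_lip a b c) <= dG (open_triangle a b c) (segment a (centroid a b c) l).
Proof.
  intros HD Hl.
  assert (Hpt : segment a (centroid a b c) l = bary_pt a b c (1 - 2 * l / 3) (l / 3) (l / 3))
    by (unfold segment, centroid, bary_pt; cbn [fst snd]; f_equal; field).
  rewrite Hpt.
  assert (HG : open_triangle a b c (bary_pt a b c (1 - 2 * l / 3) (l / 3) (l / 3)))
    by (apply open_triangle_bary_pt; lra).
  split; [exact HG|].
  eapply Rle_trans; [|apply dG_ge_bary_min; assumption].
  pose proof (bary_lip_ge1 a b c HD).
  replace (l / (3 * bary_lip a b c)) with (l / 3 / bary_lip a b c) by (field; lra).
  apply Rmult_le_compat_r; [left; apply Rinv_0_lt_compat; lra|].
  destruct (bary_pt_coords a b c HD (1 - 2 * l / 3) (l / 3) (l / 3) ltac:(lra)) as (E1 & E2 & E3).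
  unfold bary_min. rewrite E1, E2, E3. unfold Rmin. repeat destruct Rle_dec; lra.
Qed.

Lemma centroid_rot a b c : centroid b c a = centroid a b c.
Proof. unfold centroid, bary_pt. f_equal; ring. Qed.

Lemma dist_vertex_centroid_pos a b c : cross a b c <> 0 -> 0 < dist a (centroid a b c).
Proof.
  intros HD.
  assert (HG : open_triangle a b c (centroid a b c)) by (apply open_triangle_bary_pt; lra).
  pose proof (dG_pos a b c HD _ HG).
  pose proof (dG_le_dist a b c (centroid a b c) a (vertex_boundary a b c HD)).
  rewrite dist_sym. lra.
Qed.

Lemma point_near_vertex a b c rad q N : cross a b c <> 0 -> 0 < rad ->
  rad <= dist a (centroid a b c) -> 1 < q ->
  exists x, open_triangle a b c x /\ dist a x = rad / q ^ N /\
    rad / (3 * bary_lip a b c * dist a (centroid a b c)) / q ^ N <= dG (open_triangle a b c) x.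
Proof.
  intros HD Hrad Hle Hq. pose proof (dist_vertex_centroid_pos a b c HD) as Hd.
  set (d := dist a (centroid a b c)) in *.
  pose proof (pow_lt q N ltac:(lra)). pose proof (pow_R1_Rle q N ltac:(lra)).
  pose proof (bary_lip_ge1 a b c HD).
  set (l := rad / (d * q ^ N)).
  assert (Hl : 0 < l <= 1).
  { unfold l. split; [apply Rdiv_lt_0_compat; nra|].
    apply Rdiv_le_of_le_mul; nra. }
  destruct (dG_segment_centroid_ge a b c l HD Hl) as [HG HdG].
  exists (segment a (centroid a b c) l). split; [|split].
  - exact HG.
  - rewrite dist_segment_start, Rabs_pos_eq by lra. fold d. unfold l. field. lra.
  - eapply Rle_trans; [|exact HdG]. right. unfold l. field. lra.
Qed.

Lemma small_radius_exists a b c : cross a b c <> 0 ->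
  exists rad, 0 < rad /\ 2 * rad < dist a b /\
    rad <= Rmin (dist a b) (dist a c) /\ rad <= Rmin (dist b c) (dist b a) /\
    rad <= dist a (centroid a b c) /\ rad <= dist b (centroid a b c).
Proof.
  intros HD. assert (HDb : cross b c a <> 0) by (rewrite cross_rot; exact HD).
  destruct (dist_pos_of_cross a b c HD) as [Hab Hac].
  destruct (dist_pos_of_cross b c a HDb) as [Hbc Hba].
  pose proof (dist_vertex_centroid_pos a b c HD) as Hda.
  pose proof (dist_vertex_centroid_pos b c a HDb) as Hdb. rewrite centroid_rot in Hdb.
  pose proof (Rmin_l (dist a b) (dist a c)). pose proof (Rmin_r (dist a b) (dist a c)).
  pose proof (Rmin_l (dist b c) (dist b a)). pose proof (Rmin_r (dist b c) (dist b a)).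
  pose proof (Rmin_l (dist a (centroid a b c)) (dist b (centroid a b c))).
  pose proof (Rmin_r (dist a (centroid a b c)) (dist b (centroid a b c))).
  set (m1 := Rmin (dist a b) (dist a c)) in *. set (m2 := Rmin (dist b c) (dist b a)) in *.
  set (m3 := Rmin (dist a (centroid a b c)) (dist b (centroid a b c))) in *.
  assert (0 < m1 /\ 0 < m2 /\ 0 < m3) by (repeat split; apply Rmin_glb_lt; assumption).
  exists (Rmin m1 (Rmin m2 m3) / 3).
  pose proof (Rmin_l m1 (Rmin m2 m3)). pose proof (Rmin_r m1 (Rmin m2 m3)).
  pose proof (Rmin_l m2 m3). pose proof (Rmin_r m2 m3).
  assert (0 < Rmin m1 (Rmin m2 m3)) by (repeat apply Rmin_glb_lt; lra).
  repeat split; lra.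
Qed.

Lemma kG_jG_vertex_pairs a b c : cross a b c <> 0 ->
  exists C, forall q N, 1 < q -> exists x y,
    open_triangle a b c x /\ open_triangle a b c y /\
    INR N * ((1 - / q) * (/ sin (angle_at a b c / 2) + / sin (angle_at b c a / 2)))
      <= kG (open_triangle a b c) x y /\
    jG (open_triangle a b c) x y <= C + INR N * ln q.
Proof.
  intros HD. assert (HDb : cross b c a <> 0) by (rewrite cross_rot; exact HD).
  destruct (small_radius_exists a b c HD) as (rad & Hrad & H2rad & Ha & Hb & Hda & Hdb).
  pose proof (dist_vertex_centroid_pos a b c HD).
  pose proof (dist_vertex_centroid_pos b c a HDb) as Hb0. rewrite (centroid_rot a b c) in Hb0.
  pose proof (bary_lip_ge1 a b c HD). pose proof (bary_lip_ge1 b c a HDb).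
  set (ma := rad / (3 * bary_lip a b c * dist a (centroid a b c))).
  set (mb := rad / (3 * bary_lip b c a * dist b (centroid a b c))).
  assert (Hm : 0 < Rmin ma mb) by (apply Rmin_glb_lt; apply Rdiv_lt_0_compat; nra).
  exists (ln (1 + (rad + dist a b + rad) / Rmin ma mb)). intros q N Hq.
  pose proof (pow_lt q N ltac:(lra)). pose proof (pow_R1_Rle q N ltac:(lra)).
  destruct (point_near_vertex a b c rad q N HD Hrad Hda Hq) as (x & Gx & Hx & Dx).
  destruct (point_near_vertex b c a rad q N HDb Hrad) as (y & Gy & Hy & Dy);
    [rewrite centroid_rot; exact Hdb | exact Hq|].
  rewrite (open_triangle_rot a b c) in Gy, Dy. rewrite (centroid_rot a b c) in Dy.
  fold ma in Dx. fold mb in Dy.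
  exists x, y. repeat split; auto.
  - apply kG_ge_of_curves; auto. intros g Hg.
    apply qh_length_ge_annuli with x y rad; auto; lra.
  - apply jG_le_log; auto.
    + eapply Rle_trans; [|exact Dx]. apply Rmult_le_compat_r; [left; apply Rinv_0_lt_compat; lra|].
      apply Rmin_l.
    + eapply Rle_trans; [|exact Dy]. apply Rmult_le_compat_r; [left; apply Rinv_0_lt_compat; lra|].
      apply Rmin_r.
    + assert (rad / q ^ N <= rad) by (apply Rdiv_le_of_le_mul; nra).
      pose proof (dist_triangle x a y) as T1. pose proof (dist_triangle a b y) as T2.
      rewrite (dist_sym x a) in T1. lra.
Qed.

Lemma le_of_log_growth (c A C : R) : 0 < A ->
  (forall q N, 1 < q -> INR N * ((1 - / q) * c) <= A * (C + INR N * ln q)) -> c <= A.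
Proof.
  intros HA Hgrowth.
  (* Letting N go to infinity gives (1 - 1/q) c <= A ln q <= A (q - 1), i.e. c <= A q. *)
  assert (Hq : forall q, 1 < q -> c <= A * q).
  { intros q Hq.
    assert (Hlim : (1 - / q) * c <= A * ln q).
    { destruct (Rle_or_lt ((1 - / q) * c) (A * ln q)) as [|Hlt]; [assumption|]. exfalso.
      destruct (INR_archimed ((1 - / q) * c - A * ln q) (A * C) ltac:(lra)) as [N HN].
      pose proof (Hgrowth q N Hq). nra. }
    assert (Hln : ln q <= q - 1).
    { destruct (Rle_or_lt (ln q) 0); [lra|].
      pose proof (exp_ineq1 (ln q) ltac:(lra)). rewrite exp_ln in *; lra. }
    assert (Hinv : (1 - / q) = (q - 1) / q) by (field; lra).
    rewrite Hinv in Hlim.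
    apply Rmult_le_reg_l with ((q - 1) / q); [apply Rdiv_lt_0_compat; lra|].
    replace ((q - 1) / q * (A * q)) with (A * (q - 1)) by (field; lra). nra. }
  destruct (Rle_or_lt c A) as [|Hlt]; [assumption|]. exfalso.
  pose proof (Hq ((A + c) / (2 * A))) as Hmid.
  assert (1 < (A + c) / (2 * A)).
  { apply Rmult_lt_reg_r with (2 * A); [lra|].
    replace ((A + c) / (2 * A) * (2 * A)) with (A + c) by (field; lra). lra. }
  replace (A * ((A + c) / (2 * A))) with ((A + c) / 2) in Hmid by (field; lra).
  specialize (Hmid ltac:(assumption)). lra.
Qed.

Theorem theorem1p7 (a b c : pt) :
  cross a b c <> 0 ->
  angle_at a b c <= angle_at b c a ->
  angle_at b c a <= angle_at c a b ->
  uniformity_const_ge (open_triangle a b c)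
    (/ sin (angle_at a b c / 2) + / sin (angle_at b c a / 2)).
Proof.
  intros HD _ _ A [HA1 HA].
  destruct (kG_jG_vertex_pairs a b c HD) as [C HC].
  apply le_of_log_growth with C; [lra|]. intros q N Hq.
  destruct (HC q N Hq) as (x & y & Hx & Hy & Hk & Hj).
  eapply Rle_trans; [exact Hk|]. eapply Rle_trans; [exact (HA x y Hx Hy)|].
  apply Rmult_le_compat_l; [lra | exact Hj].
Qed.
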